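(* Let $R$ be a Noetherian hyperring. The following are equivalent: (i) $R$ is Artinian; (ii) $Spec(R)$ with the Zariski topology is discrete and finite; (iii) $Spec(R)$ with the Zariski topology is discrete.
   Context: Standing conventions. A hyperring means a commutative Krasner hyperring with identity: a set $R$ with a hyperoperation $+:R\times R\to\mathcal P^*(R)$ (nonempty subsets; for subsets $A,B$ one sets $A+B=\bigcup_{a\in A,b\in B}a+b$) and a binary operation $\cdot$ such that: $+$ is associative and commutative; there is $0\in R$ with $0+x=\{x\}$ for all $x$; every $x$ has a unique $-x$ with $0\in x+(-x)$; $z\in x+y$ implies $y\in -x+z$ and $x\in z-y$; $(R,\cdot)$ is a commutative monoid with identity $1$; $0\cdot x=0$; and $x(y+z)=xy+xz$. A hyperideal of $R$ is a nonempty $I\subseteq R$ with $a-b\subseteq I$ and $ra\in I$ for all $a,b\in I$, $r\in R$. $R$ is Noetherian (resp. Artinian) if every ascending (resp. descending) chain of hyperideals of $R$ stabilizes. A proper hyperideal $P$ is prime if $ab\in P$ implies $a\in P$ or $b\in P$. $Spec(R)$ is the set of prime hyperideals of $R$; for $S\subseteq R$, $V(S)=\{P\in Spec(R): S\subseteq P\}$. The Zariski topology on $Spec(R)$ is the topology whose closed sets are the sets $V(I)$, $I$ a hyperideal of $R$. *)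

From Stdlib Require Import List Arith.

Set Implicit Arguments.

(* A commutative Krasner hyperring with identity.  The hyperoperation
   x + y is the set [hadd x y : T -> Prop]. *)
Record hyperring := HyperRing {
  carrier :> Type;
  hadd : carrier -> carrier -> carrier -> Prop;
  hmul : carrier -> carrier -> carrier;
  hzero : carrier;
  hone : carrier;
  hneg : carrier -> carrier;
  hadd_nonempty : forall x y, exists z, hadd x y z;
  (* associativity: (x + y) + z = x + (y + z) as sets *)
  hadd_assoc : forall x y z w,
      (exists u, hadd x y u /\ hadd u z w) <-> (exists v, hadd y z v /\ hadd x v w);
  hadd_comm : forall x y z, hadd x y z <-> hadd y x z;
  hadd_zero : forall x z, hadd hzero x z <-> z = x;
  hadd_neg : forall x, hadd x (hneg x) hzero;
  hneg_unique : forall x y, hadd x y hzero -> y = hneg x;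
  hadd_rev : forall x y z, hadd x y z -> hadd (hneg x) z y /\ hadd z (hneg y) x;
  hmul_assoc : forall x y z, hmul x (hmul y z) = hmul (hmul x y) z;
  hmul_comm : forall x y, hmul x y = hmul y x;
  hmul_one : forall x, hmul hone x = x;
  hmul_zero : forall x, hmul hzero x = hzero;
  (* distributivity: x (y + z) = x y + x z as sets *)
  hmul_distr : forall x y z w,
      (exists u, hadd y z u /\ w = hmul x u) <-> hadd (hmul x y) (hmul x z) w
}.

Section Defs.
Variable R : hyperring.

Definition hsubset (A B : R -> Prop) : Prop := forall x, A x -> B x.
Definition hseteq (A B : R -> Prop) : Prop := forall x, A x <-> B x.

Definition hyperideal (I : R -> Prop) : Prop :=
  (exists a, I a) /\
  (forall a b c, I a -> I b -> hadd R a (hneg R b) c -> I c) /\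
  (forall r a, I a -> I (hmul R r a)).

Definition noetherian : Prop :=
  forall I : nat -> R -> Prop,
    (forall n, hyperideal (I n)) ->
    (forall n, hsubset (I n) (I (S n))) ->
    exists N, forall n, N <= n -> hseteq (I n) (I N).

Definition artinian : Prop :=
  forall I : nat -> R -> Prop,
    (forall n, hyperideal (I n)) ->
    (forall n, hsubset (I (S n)) (I n)) ->
    exists N, forall n, N <= n -> hseteq (I n) (I N).

Definition prime_hyperideal (P : R -> Prop) : Prop :=
  hyperideal P /\ (exists x, ~ P x) /\
  (forall a b, P (hmul R a b) -> P a \/ P b).

Definition Spec : Type := { P : R -> Prop | prime_hyperideal P }.

Definition V (S : R -> Prop) : Spec -> Prop := fun P => hsubset S (proj1_sig P).

Definition zariski_closed (C : Spec -> Prop) : Prop :=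
  exists I, hyperideal I /\ forall P, C P <-> V I P.

Definition zariski_open (U : Spec -> Prop) : Prop :=
  zariski_closed (fun P => ~ U P).

Definition spec_discrete : Prop := forall U : Spec -> Prop, zariski_open U.

(* Spec(R) is finite (prime hyperideals identified extensionally) *)
Definition spec_finite : Prop :=
  exists l : list Spec, forall P : Spec, exists Q, In Q l /\ hseteq (proj1_sig P) (proj1_sig Q).

End Defs.

(* All three conditions amount to "every prime hyperideal is maximal".
   In an Artinian hyperring, for x in K \ P the chain x^n R stabilises, so
   x^N = x^(N+1) r; then x^N u = 0 for some u in 1 - x r, and primality puts
   u in P, whence 1 in u + x r lies in K.  Conversely, if every prime is
   maximal, a maximal hyperideal J lying below some non-stabilising
   descending chain (it exists by the Noetherian hypothesis) is prime: if
   a b in J with a, b outside J, the chains I_n + aR and (I_n : a) lie above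
   the strictly larger hyperideals J + aR and (J : a), hence stabilise, and
   then so does I_n.  A chain above the maximal hyperideal J stabilises
   trivially, so R is Artinian.  In an Artinian hyperring the finite
   intersections of primes cannot descend forever, which together with prime
   avoidance makes Spec(R) finite; with finitely many maximal points every
   subset of Spec(R) is closed.  Finally discreteness makes primes
   incomparable, and every proper hyperideal lies in a prime (a maximal one,
   by the Noetherian hypothesis), so every prime is maximal. *)

From Stdlib Require Import List Lia.
From Stdlib Require Import Classical ClassicalEpsilon FunctionalExtensionality
  PropExtensionality ProofIrrelevance.

Section HyperringTheory.
Variable R : hyperring.
Local Notation add := (hadd R).
Local Notation mul := (hmul R).
Local Notation neg := (hneg R).
Local Notation zero := (hzero R).
Local Notation one := (hone R).
Local Notation hsub := (hsubset R).
Local Notation heq := (hseteq R).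

Lemma hneg_involutive x : neg (neg x) = x.
Proof. symmetry. apply hneg_unique, hadd_comm, hadd_neg. Qed.

Lemma hadd_0_l x : add zero x x.
Proof. apply hadd_zero; reflexivity. Qed.

Lemma hadd_0_r x : add x zero x.
Proof. apply hadd_comm, hadd_0_l. Qed.

Lemma hmul_0_r x : mul x zero = zero.
Proof. rewrite hmul_comm; apply hmul_zero. Qed.

Lemma hmul_1_r x : mul x one = x.
Proof. rewrite hmul_comm; apply hmul_one. Qed.

Lemma hmul_neg_r x y : mul x (neg y) = neg (mul x y).
Proof.
  apply hneg_unique, hmul_distr.
  exists zero. split; [apply hadd_neg | symmetry; apply hmul_0_r].
Qed.

Lemma hneg_hadd x y z : add x y z -> add (neg x) (neg y) (neg z).
Proof.
  assert (Hneg : forall u, neg u = mul (neg one) u).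
  { intro u. rewrite hmul_comm, hmul_neg_r, hmul_1_r. reflexivity. }
  intro H. rewrite (Hneg x), (Hneg y), (Hneg z). apply hmul_distr. exists z; auto.
Qed.

Lemma hadd_interchange x y z w u v c :
  add x y u -> add z w v -> add u v c ->
  exists p q, add x z p /\ add y w q /\ add p q c.
Proof.
  intros Hu Hv Hc.
  destruct (proj1 (hadd_assoc R x y v c) (ex_intro _ u (conj Hu Hc)))
    as [s [Hs Hxs]].
  apply hadd_comm in Hs.
  destruct (proj1 (hadd_assoc R z w y s) (ex_intro _ v (conj Hv Hs)))
    as [q [Hq Hzq]].
  destruct (proj2 (hadd_assoc R x z q c) (ex_intro _ s (conj Hzq Hxs)))
    as [p [Hp Hpq]].
  exists p, q. split; [|split]; auto. apply hadd_comm, Hq.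
Qed.

Section Hyperideal.
Variable I : R -> Prop.
Hypothesis HI : hyperideal R I.

Lemma hyperideal_0 : I zero.
Proof. destruct HI as [[a Ha] [Hsub _]]. apply (Hsub a a); auto. apply hadd_neg. Qed.

Lemma hyperideal_neg a : I a -> I (neg a).
Proof.
  intro Ha. destruct HI as [_ [Hsub _]].
  apply (Hsub zero a); auto using hyperideal_0, hadd_0_l.
Qed.

Lemma hyperideal_hadd a b c : I a -> I b -> add a b c -> I c.
Proof.
  intros Ha Hb Hc. destruct HI as [_ [Hsub _]].
  apply (Hsub a (neg b)); auto using hyperideal_neg.
  rewrite hneg_involutive; auto.
Qed.

Lemma hyperideal_hmul_l r a : I a -> I (mul r a).
Proof. apply HI. Qed.

Lemma hyperideal_hmul_r r a : I a -> I (mul a r).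
Proof. rewrite hmul_comm. apply hyperideal_hmul_l. Qed.

Lemma hyperideal_full : I one -> forall x, I x.
Proof. intros H x. rewrite <- (hmul_1_r x). apply hyperideal_hmul_l, H. Qed.

End Hyperideal.

Lemma zero_hyperideal : hyperideal R (fun x => x = zero).
Proof.
  split; [exists zero; reflexivity | split].
  - intros a b c -> -> Hc. apply hadd_zero in Hc. subst.
    symmetry. apply hneg_unique, hadd_0_l.
  - intros r a ->. apply hmul_0_r.
Qed.

Lemma prime_not_one P : prime_hyperideal R P -> ~ P one.
Proof. intros [HP [[x Hx] _]] H1. apply Hx, hyperideal_full; auto. Qed.

Lemma inter_hyperideal (G : Spec R -> Prop) :
  hyperideal R (fun x => forall P, G P -> proj1_sig P x).
Proof.
  split; [|split].
  - exists zero. intros P _. apply hyperideal_0, (proj2_sig P).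
  - intros a b c Ha Hb Hc P HP. apply (proj2_sig P) with a b; auto.
  - intros r a Ha P HP. apply hyperideal_hmul_l; [apply (proj2_sig P) | auto].
Qed.

Lemma Spec_ext (P Q : Spec R) : heq (proj1_sig P) (proj1_sig Q) -> P = Q.
Proof.
  destruct P as [p hp], Q as [q hq]. simpl. intro H.
  assert (p = q) as ->.
  { apply functional_extensionality. intro x. apply propositional_extensionality, H. }
  f_equal. apply proof_irrelevance.
Qed.

Definition primes_maximal : Prop :=
  forall P K, prime_hyperideal R P -> hyperideal R K -> hsub P K ->
  hsub K P \/ K one.

Lemma primes_maximal_incomparable : primes_maximal ->
  forall P Q, prime_hyperideal R P -> prime_hyperideal R Q -> hsub P Q -> hsub Q P.
Proof.
  intros Hmax P Q HP HQ HPQ.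
  destruct (Hmax P Q HP (proj1 HQ) HPQ) as [H | H]; auto.
  exfalso. apply (prime_not_one Q); auto.
Qed.

Definition multiples (c : R) : R -> Prop := fun y => exists r, y = mul c r.

Lemma multiples_hyperideal c : hyperideal R (multiples c).
Proof.
  split; [|split].
  - exists zero, zero. symmetry; apply hmul_0_r.
  - intros y y' z [r ->] [r' ->] Hz. rewrite <- hmul_neg_r in Hz.
    destruct (proj2 (hmul_distr R _ _ _ _) Hz) as [u [_ Hu]]. exists u; auto.
  - intros s y [r ->]. exists (mul s r).
    rewrite !hmul_assoc, (hmul_comm R s). reflexivity.
Qed.

Fixpoint hpow (x : R) (n : nat) : R :=
  match n with O => one | S m => mul x (hpow x m) end.

Lemma prime_hpow P x n : prime_hyperideal R P -> P (hpow x n) -> P x.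
Proof.
  intro HP. induction n as [|n IH]; simpl; intro H.
  - exfalso. apply (prime_not_one P); auto.
  - destruct (proj2 (proj2 HP) _ _ H); auto.
Qed.

Lemma artinian_primes_maximal : artinian R -> primes_maximal.
Proof.
  intros HA P K HP HK HPK.
  destruct (classic (hsub K P)) as [| HKP]; [left; auto | right].
  apply not_all_ex_not in HKP as [x HKx].
  apply imply_to_and in HKx as [Kx Px].
  destruct (HA (fun n => multiples (hpow x n))) as [N HN].
  - intro n. apply multiples_hyperideal.
  - intros n y [r ->]. exists (mul x r). simpl.
    rewrite !hmul_assoc, (hmul_comm R x). reflexivity.
  - set (X := hpow x N).
    assert (HXr : exists r, X = mul X (mul x r)).
    { destruct (proj2 (HN (S N) (le_S _ _ (le_n N)) X)) as [r Hr].
      - exists one. rewrite hmul_1_r. reflexivity.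
      - exists r. rewrite Hr at 1. simpl.
        rewrite !hmul_assoc, (hmul_comm R X x). reflexivity. }
    destruct HXr as [r HXr].
    assert (H0 : add (mul X one) (mul X (neg (mul x r))) zero).
    { rewrite hmul_1_r, hmul_neg_r, <- HXr. apply hadd_neg. }
    destruct (proj2 (hmul_distr R _ _ _ _) H0) as [u [Hu Hu0]].
    (* x^N u = 0 lies in P while x^N does not, so u in P; and 1 in u + x r *)
    assert (Pu : P u).
    { destruct (proj2 (proj2 HP) X u) as [PX | ]; auto.
      - rewrite <- Hu0. apply hyperideal_0, HP.
      - exfalso. apply Px, (prime_hpow P x N HP PX). }
    destruct (hadd_rev R _ _ _ Hu) as [_ Hone]. rewrite hneg_involutive in Hone.
    apply (hyperideal_hadd K HK u (mul x r)); auto.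
    apply hyperideal_hmul_r; auto.
Qed.

Definition descending (I : nat -> R -> Prop) : Prop := forall n, hsub (I (S n)) (I n).

Definition stabilizes (I : nat -> R -> Prop) : Prop :=
  exists N, forall n, N <= n -> heq (I n) (I N).

Lemma descending_le I : descending I -> forall m n, m <= n -> hsub (I n) (I m).
Proof.
  intros HI m n Hmn. induction Hmn as [|n _ IH]; intros x Hx; auto.
  apply IH, HI, Hx.
Qed.

Definition principal_sum (I : R -> Prop) (a : R) : R -> Prop :=
  fun y => exists i r, I i /\ add i (mul a r) y.

Definition colon (I : R -> Prop) (a : R) : R -> Prop := fun x => I (mul a x).

Lemma principal_sum_hyperideal I a : hyperideal R I -> hyperideal R (principal_sum I a).
Proof.
  intro HI. split; [|split].
  - exists zero, zero, zero. rewrite hmul_0_r.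
    split; [apply hyperideal_0 | apply hadd_0_l]; auto.
  - intros y y' c [i [r [Hi Hy]]] [i' [r' [Hi' Hy']]] Hc.
    apply hneg_hadd in Hy'. rewrite <- hmul_neg_r in Hy'.
    destruct (hadd_interchange _ _ _ _ _ _ _ Hy Hy' Hc) as [p [q [Hp [Hq Hpq]]]].
    destruct (proj2 (hmul_distr R a r (neg r') q) Hq) as [t [_ Ht]].
    exists p, t. split.
    + apply (hyperideal_hadd I HI i (neg i')); [| apply hyperideal_neg |]; auto.
    + rewrite <- Ht; auto.
  - intros s y [i [r [Hi Hy]]]. exists (mul s i), (mul s r).
    split; [apply hyperideal_hmul_l; auto|].
    replace (mul a (mul s r)) with (mul s (mul a r)).
    + apply hmul_distr. exists y; auto.
    + rewrite !hmul_assoc, (hmul_comm R s a). reflexivity.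
Qed.

Lemma colon_hyperideal I a : hyperideal R I -> hyperideal R (colon I a).
Proof.
  intro HI. split; [|split]; unfold colon.
  - exists zero. rewrite hmul_0_r. apply hyperideal_0; auto.
  - intros x y c Hx Hy Hc.
    apply (hyperideal_hadd I HI (mul a x) (mul a (neg y))); auto.
    + rewrite hmul_neg_r. apply hyperideal_neg; auto.
    + apply hmul_distr. exists c; auto.
  - intros r x Hx. rewrite hmul_assoc, (hmul_comm R a r), <- hmul_assoc.
    apply hyperideal_hmul_l; auto.
Qed.

Lemma principal_sum_incl I a : hsub I (principal_sum I a).
Proof. intros x Hx. exists x, zero. rewrite hmul_0_r. auto using hadd_0_r. Qed.

Lemma principal_sum_generator I a : hyperideal R I -> principal_sum I a a.
Proof.
  intro HI. exists zero, one. rewrite hmul_1_r.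
  split; [apply hyperideal_0 | apply hadd_0_l]; auto.
Qed.

Lemma colon_incl I a : hyperideal R I -> hsub I (colon I a).
Proof. intros HI x Hx. unfold colon. apply hyperideal_hmul_l; auto. Qed.

Lemma principal_sum_mono I J a : hsub I J -> hsub (principal_sum I a) (principal_sum J a).
Proof. intros H y [i [r [Hi Hy]]]. exists i, r; auto. Qed.

Lemma colon_mono I J a : hsub I J -> hsub (colon I a) (colon J a).
Proof. intros H y. apply H. Qed.

Lemma incl_of_principal_sum_colon I J a : hyperideal R I -> hyperideal R J ->
  hsub I J -> hsub (principal_sum J a) (principal_sum I a) ->
  hsub (colon J a) (colon I a) -> hsub J I.
Proof.
  intros HI HJ HIJ Hsum Hcol x Jx.
  destruct (Hsum x (principal_sum_incl J a x Jx)) as [i [r [Ii Hx]]].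
  destruct (hadd_rev R _ _ _ Hx) as [Hr _].
  assert (Ir : colon I a r).
  { apply Hcol. apply (hyperideal_hadd J HJ (neg i) x); auto.
    apply hyperideal_neg; auto. }
  apply (hyperideal_hadd I HI i (mul a r)); auto.
Qed.

Lemma stabilizes_of_principal_sum_colon I a :
  (forall n, hyperideal R (I n)) -> descending I ->
  stabilizes (fun n => principal_sum (I n) a) -> stabilizes (fun n => colon (I n) a) ->
  stabilizes I.
Proof.
  intros HI Hdesc [N1 HN1] [N2 HN2]. exists (Nat.max N1 N2). intros n Hn x.
  split; [apply descending_le; auto|].
  apply (incl_of_principal_sum_colon (I n) (I (Nat.max N1 N2)) a); auto.
  - apply descending_le; auto.
  - intros y Hy. apply (HN1 n); [lia|]. apply (HN1 (Nat.max N1 N2)); [lia | auto].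
  - intros y Hy. apply (HN2 n); [lia|]. apply (HN2 (Nat.max N1 N2)); [lia | auto].
Qed.

Lemma noetherian_maximal (F : (R -> Prop) -> Prop) : noetherian R ->
  (forall J, F J -> hyperideal R J) -> (exists J, F J) ->
  exists J, F J /\ forall K, F K -> hsub J K -> hsub K J.
Proof.
  intros HN HF [J0 HJ0]. apply NNPP; intro Hno.
  assert (Hstep : forall J, F J -> exists K, F K /\ hsub J K /\ ~ hsub K J).
  { intros J HJ. apply NNPP; intro Hnext. apply Hno. exists J. split; auto.
    intros K HK HJK. apply NNPP; intro HKJ. apply Hnext. exists K; auto. }
  pose (next := fun s : {J | F J} =>
    let e := constructive_indefinite_description _ (Hstep (proj1_sig s) (proj2_sig s)) in
    exist F (proj1_sig e) (proj1 (proj2_sig e))).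
  pose (chain := fix chain (n : nat) : {J | F J} :=
          match n with O => exist F J0 HJ0 | S m => next (chain m) end).
  assert (Hstrict : forall n, hsub (proj1_sig (chain n)) (proj1_sig (chain (S n)))
                    /\ ~ hsub (proj1_sig (chain (S n))) (proj1_sig (chain n))).
  { intro n. simpl. unfold next. simpl.
    destruct (constructive_indefinite_description _ _) as [K [HK HJK]]. exact HJK. }
  destruct (HN (fun n => proj1_sig (chain n))) as [N HNs].
  - intro n. apply HF, proj2_sig.
  - intro n. apply Hstrict.
  - apply (proj2 (Hstrict N)). intros x Hx. apply (HNs (S N)); auto.
Qed.

Lemma maximal_proper_prime M : hyperideal R M -> ~ M one ->
  (forall K, hyperideal R K -> ~ K one -> hsub M K -> hsub K M) ->
  prime_hyperideal R M.
Proof.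
  intros HM M1 Hmax. split; [auto | split; [exists one; auto|]].
  intros a b Hab. destruct (classic (M a)) as [| Ma]; [left; auto | right].
  (* M + aR is strictly larger than M, so it contains 1 = m + a r *)
  assert (Hone : principal_sum M a one).
  { apply NNPP; intro Hn. apply Ma, (Hmax (principal_sum M a)).
    - apply principal_sum_hyperideal; auto.
    - exact Hn.
    - apply principal_sum_incl.
    - apply principal_sum_generator; auto. }
  destruct Hone as [m [r [Mm Hm]]].
  assert (Hb : add (mul b m) (mul b (mul a r)) (mul b one)).
  { apply hmul_distr. exists one; auto. }
  rewrite hmul_1_r in Hb.
  refine (hyperideal_hadd M HM _ _ _ (hyperideal_hmul_l M HM b m Mm) _ Hb).
  rewrite hmul_assoc, (hmul_comm R b a). apply hyperideal_hmul_r; auto.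
Qed.

Lemma proper_hyperideal_in_prime K : noetherian R -> hyperideal R K -> ~ K one ->
  exists M, prime_hyperideal R M /\ hsub K M.
Proof.
  intros HN HK K1.
  destruct (noetherian_maximal (fun M => hyperideal R M /\ hsub K M /\ ~ M one) HN)
    as [M [[HM [HKM M1]] Hmax]].
  - intros J [HJ _]; auto.
  - exists K. split; [auto | split; [intros x; auto | auto]].
  - exists M. split; auto. apply maximal_proper_prime; auto.
    intros L HL L1 HML. apply Hmax; auto. split; [auto | split; [|auto]].
    intros x Hx. apply HML, HKM, Hx.
Qed.

Definition bounds_unstable_chain (J : R -> Prop) : Prop :=
  hyperideal R J /\ exists I : nat -> R -> Prop,
    (forall n, hyperideal R (I n)) /\ descending I /\
    (forall n, hsub J (I n)) /\ ~ stabilizes I.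

Lemma bounds_unstable_chain_image (f : (R -> Prop) -> R -> Prop) J I :
  (forall K, hyperideal R K -> hyperideal R (f K)) ->
  (forall K L, hsub K L -> hsub (f K) (f L)) ->
  hyperideal R J -> (forall n, hyperideal R (I n)) -> descending I ->
  (forall n, hsub J (I n)) -> ~ stabilizes (fun n => f (I n)) ->
  bounds_unstable_chain (f J).
Proof.
  intros Hf Hmono HJ HI Hdesc HJI Hns. split; auto.
  exists (fun n => f (I n)). split; [auto | split; [| split; [| exact Hns]]].
  - intro n. apply Hmono, Hdesc.
  - intro n. apply Hmono, HJI.
Qed.

Lemma maximal_bound_prime J :
  bounds_unstable_chain J ->
  (forall K, bounds_unstable_chain K -> hsub J K -> hsub K J) ->
  forall a b, J (mul a b) -> J a \/ J b.
Proof.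
  intros [HJ [I [HI [Hdesc [HJI Hns]]]]] Hmax a b Jab.
  apply NNPP; intro Hab. apply not_or_and in Hab as [Ja Jb].
  apply Hns, (stabilizes_of_principal_sum_colon I a); auto.
  - apply NNPP; intro Hn. apply Ja, (Hmax (principal_sum J a)).
    + apply (bounds_unstable_chain_image (fun K => principal_sum K a) J I);
        auto using principal_sum_hyperideal, principal_sum_mono.
    + apply principal_sum_incl.
    + apply principal_sum_generator; auto.
  - apply NNPP; intro Hn. apply Jb, (Hmax (colon J a)).
    + apply (bounds_unstable_chain_image (fun K => colon K a) J I);
        auto using colon_hyperideal, colon_mono.
    + apply colon_incl; auto.
    + exact Jab.
Qed.

Lemma stabilizes_above_prime J I : primes_maximal ->
  hyperideal R J -> (forall a b, J (mul a b) -> J a \/ J b) ->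
  (forall n, hyperideal R (I n)) -> descending I -> (forall n, hsub J (I n)) ->
  stabilizes I.
Proof.
  intros Hpm HJ Jprime HI Hdesc HJI.
  assert (Hfull : (forall n x, I n x) -> stabilizes I).
  { intro H. exists 0. intros n _ x. split; intros _; apply H. }
  destruct (classic (J one)) as [J1 | J1].
  { apply Hfull. intros n. apply hyperideal_full; auto. apply HJI, J1. }
  assert (PJ : prime_hyperideal R J) by (split; [| split; [exists one |]]; auto).
  destruct (classic (exists N, hsub (I N) J)) as [[N HN] | Hno].
  - exists N. intros n Hn x. split; [apply descending_le; auto|].
    intro Hx. apply HJI, HN, Hx.
  - apply Hfull. intros m.
    destruct (Hpm J (I m) PJ (HI m) (HJI m)) as [Hm | Hm].
    + exfalso. apply Hno. exists m; auto.
    + apply hyperideal_full; auto.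
Qed.

Lemma noetherian_primes_maximal_artinian : noetherian R -> primes_maximal -> artinian R.
Proof.
  intros HN Hpm I HI Hdesc. apply NNPP; intro Hns.
  destruct (noetherian_maximal bounds_unstable_chain HN) as [J [HJ Hmax]].
  - intros J [HJ _]; auto.
  - exists (fun x => x = zero). split; [apply zero_hyperideal|].
    exists I. split; [auto | split; [auto | split; [| exact Hns]]].
    intros n x ->. apply hyperideal_0; auto.
  - pose proof (maximal_bound_prime J HJ Hmax) as Jprime.
    destruct HJ as [HJ [I' [HI' [Hdesc' [HJI' Hns']]]]].
    apply Hns', (stabilizes_above_prime J); auto.
Qed.

Lemma prime_avoidance Q (D : Spec R -> Prop) (L : list (Spec R)) :
  prime_hyperideal R Q ->
  (forall x, (forall P, In P L -> D P -> proj1_sig P x) -> Q x) ->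
  exists P, In P L /\ D P /\ hsub (proj1_sig P) Q.
Proof.
  intros HQ Hinter. apply NNPP; intro Hno.
  (* otherwise each P in L with D P has an element outside Q, and their
     product lies in every such P but not in the prime Q *)
  assert (Havoid : forall L', incl L' L ->
            exists b, (forall P, In P L' -> D P -> proj1_sig P b) /\ ~ Q b).
  { induction L' as [|P L' IH]; intro Hincl.
    - exists one. split; [intros P [] | apply prime_not_one; auto].
    - destruct IH as [b [Hb Qb]]; [intros P' HP'; apply Hincl; right; auto|].
      destruct (classic (D P)) as [DP | DP].
      + assert (Ha : exists a, proj1_sig P a /\ ~ Q a).
        { apply NNPP; intro Hna. apply Hno. exists P.
          repeat split; auto; [apply Hincl; left; auto|].
          intros x Px. apply NNPP; intro Qx. apply Hna. exists x; auto. }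
        destruct Ha as [a [Pa Qa]].
        exists (mul a b). split.
        * intros P' [-> | HP'] DP'.
          -- apply hyperideal_hmul_r; [apply (proj2_sig P') | auto].
          -- apply hyperideal_hmul_l; [apply (proj2_sig P') | auto].
        * intro Qab. destruct (proj2 (proj2 HQ) a b Qab); auto.
      + exists b. split; auto. intros P' [-> | HP'] DP'; [contradiction | auto]. }
  destruct (Havoid L (incl_refl L)) as [b [Hb Qb]]. apply Qb, Hinter, Hb.
Qed.

Lemma artinian_spec_finite : artinian R -> spec_finite R.
Proof.
  intro HA. pose proof (primes_maximal_incomparable (artinian_primes_maximal HA)) as Hinc.
  apply NNPP; intro Hnf.
  assert (Hstep : forall L : list (Spec R), exists Q : Spec R,
             ~ (forall x, (forall P, In P L -> proj1_sig P x) -> proj1_sig Q x)).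
  { intro L. apply NNPP; intro H. apply Hnf. exists L. intro Q.
    destruct (prime_avoidance (proj1_sig Q) (fun _ => True) L (proj2_sig Q))
      as [P [HP [_ HPQ]]].
    - apply NNPP; intro H2. apply H. exists Q. intro H3. apply H2. intros x Hx.
      apply H3. intros P HP. apply Hx; auto.
    - exists P. split; auto. intro x. split; [|apply HPQ].
      apply Hinc; auto; apply proj2_sig. }
  pose (next := fun L => proj1_sig (constructive_indefinite_description _ (Hstep L))).
  pose (lists := fix lists (n : nat) : list (Spec R) :=
          match n with O => nil | S m => next (lists m) :: lists m end).
  destruct (HA (fun n x => forall P, In P (lists n) -> proj1_sig P x)) as [N HN].
  - intro n. apply (inter_hyperideal (fun P => In P (lists n))).
  - intros n x Hx P HP. apply Hx. right; auto.
  - apply (proj2_sig (constructive_indefinite_description _ (Hstep (lists N)))).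
    intros x Hx. apply (HN (S N)); auto. left; reflexivity.
Qed.

Lemma primes_maximal_spec_discrete : primes_maximal -> spec_finite R -> spec_discrete R.
Proof.
  intros Hpm [l Hl] U.
  exists (fun x => forall P, ~ U P -> proj1_sig P x).
  split; [apply (inter_hyperideal (fun P => ~ U P))|].
  intro Q. split.
  - intros UQ x Hx. exact (Hx Q UQ).
  - intros VQ HUQ.
    destruct (prime_avoidance (proj1_sig Q) (fun P => ~ U P) l (proj2_sig Q))
      as [P [_ [UP HPQ]]].
    + intros x Hx. apply VQ. intros P UP. destruct (Hl P) as [P' [HP' HPP']].
      apply Spec_ext in HPP'. subst P'. auto.
    + replace Q with P in HUQ; auto. apply Spec_ext. intro x. split; [apply HPQ|].
      apply (primes_maximal_incomparable Hpm); auto; apply proj2_sig.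
Qed.

Lemma spec_discrete_incomparable : spec_discrete R ->
  forall P Q, prime_hyperideal R P -> prime_hyperideal R Q -> hsub P Q -> hsub Q P.
Proof.
  intros Hd P Q HP HQ HPQ.
  (* the point {P} is closed, i.e. equal to some V(I), and Q lies in V(I) *)
  destruct (Hd (fun S => S <> exist _ P HP)) as [I [_ HIff]].
  assert (VP : V I (exist _ P HP)) by (apply HIff; auto).
  assert (VQ : V I (exist _ Q HQ)) by (intros x Hx; apply HPQ, VP, Hx).
  apply HIff, NNPP in VQ. injection VQ as ->. intros x; auto.
Qed.

Lemma spec_discrete_primes_maximal : noetherian R -> spec_discrete R -> primes_maximal.
Proof.
  intros HN Hd P K HP HK HPK.
  destruct (classic (K one)) as [| K1]; [right; auto | left].
  destruct (proper_hyperideal_in_prime K HN HK K1) as [M [HM HKM]].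
  intros x Kx. apply (spec_discrete_incomparable Hd P M); auto.
  intros y Py. apply HKM, HPK, Py.
Qed.

End HyperringTheory.

Theorem mainTheorem12 (R : hyperring) (HN : noetherian R) :
  (artinian R <-> (spec_discrete R /\ spec_finite R)) /\
  ((spec_discrete R /\ spec_finite R) <-> spec_discrete R).
Proof.
  assert (Hartin : spec_discrete R -> artinian R).
  { intro Hd. apply noetherian_primes_maximal_artinian; auto.
    apply spec_discrete_primes_maximal; auto. }
  assert (Hfin : artinian R -> spec_discrete R /\ spec_finite R).
  { intro HA. pose proof (artinian_spec_finite R HA) as Hf. split; auto.
    apply primes_maximal_spec_discrete; auto. apply artinian_primes_maximal; auto. }
  split; split.
  - exact Hfin.
  - intros [Hd _]. apply Hartin, Hd.
  - intros [Hd _]. exact Hd.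
  - intro Hd. apply Hfin, Hartin, Hd.
Qed.
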